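(* Let $\Lambda\in\mathcal H$ be of integral type and $\tilde\Lambda\in\mathcal H$ of $\Lambda$-integral type. Consider ${}_{\tilde\Lambda}\mathcal V$ as a right module over the algebra $\mathcal V_{\tilde\Lambda}$ via $x\cdot a=S(\pi(a))x$. Then ${}_{\tilde\Lambda}\mathcal V$ is a cyclic $\mathcal V_{\tilde\Lambda}$-module if and only if $1_{\mathcal H}\in\mathcal V_{\tilde\Lambda}$ and $\mathcal V_{\tilde\Lambda}$ is a Frobenius algebra.
   Context: $k$ is a field; $\mathcal H$ is a Hopf algebra over $k$ with comultiplication $\Delta$, counit $\varepsilon$, invertible antipode $S$, dual $\mathcal H'$. For $\Lambda\in\mathcal H$ put $\mathcal V_\Lambda=\{(\nu\otimes\mathrm{id})\Delta(\Lambda):\nu\in\mathcal H'\}$ and ${}_\Lambda\mathcal V=\{(\mathrm{id}\otimes\nu)\Delta(\Lambda):\nu\in\mathcal H'\}$. A non-zero $\Lambda$ is of integral type if $\Delta(\Lambda)(1\otimes\Lambda)=\Lambda\otimes\Lambda$; for such $\Lambda$, a non-zero $\tilde\Lambda$ is of $\Lambda$-integral type if $\Delta(\tilde\Lambda)(1\otimes\tilde\Lambda)=\Lambda\otimes\tilde\Lambda$. $\mathcal A_{\tilde\Lambda}=\{a\in\mathcal H:\ \Delta(a)(1\otimes\tilde\Lambda)=b\otimes\tilde\Lambda\text{ for some }b\}$; $b$ is unique, denoted $\pi(a)$, and $\pi:\mathcal A_{\tilde\Lambda}\to\mathcal H$ is an injective algebra homomorphism; $\mathcal V_{\tilde\Lambda}$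 is a subalgebra of $\mathcal A_{\tilde\Lambda}$. A right module $M$ over an algebra $\mathcal B$ is cyclic if there is $m\in M$ with $m\mathcal B=M$. A finite-dimensional unital algebra $\mathcal B$ is Frobenius if it admits a non-degenerate bilinear form $\sigma$ with $\sigma(ab,c)=\sigma(a,bc)$ for all $a,b,c$ (equivalently, it admits a faithful functional $\omega$, i.e. $\omega(ab)=0$ for all $b$ implies $a=0$). *)

From HB Require Import structures.
From mathcomp Require Import all_boot all_order all_algebra.
Set Implicit Arguments. Unset Strict Implicit. Unset Printing Implicit Defensive.
Import GRing.Theory.
Local Open Scope ring_scope.

(* Elements of H (x) H are represented by finite lists of pure tensors
   sum_i a_i (x) b_i; two representatives denote the same tensor iff all
   functionals nu (x) mu (nu, mu in the dual H') agree on them (over a field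
   the canonical map H(x)H -> (H' x H' -> k) is injective). Same for H(x)H(x)H. *)
Definition tens2 (H : Type) := seq (H * H).
Definition tens3 (H : Type) := seq (H * H * H).

Notation dual H := {scalar H}.

Section Hopf.
Variables (K : fieldType) (H : algType K).

Definition teq2 (t s : tens2 H) : Prop :=
  forall nu mu : dual H,
    \sum_(p <- t) nu p.1 * mu p.2 = \sum_(p <- s) nu p.1 * mu p.2.

Definition teq3 (t s : tens3 H) : Prop :=
  forall nu mu rho : dual H,
    \sum_(p <- t) nu p.1.1 * mu p.1.2 * rho p.2
    = \sum_(p <- s) nu p.1.1 * mu p.1.2 * rho p.2.

Definition tmul (t s : tens2 H) : tens2 H :=
  flatten [seq [seq (p.1 * q.1, p.2 * q.2) | q <- s] | p <- t].

Definition tscale (a : K) (t : tens2 H) : tens2 H :=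
  [seq (a *: p.1, p.2) | p <- t].

Definition lslice (nu : H -> K) (t : tens2 H) : H := \sum_(p <- t) nu p.1 *: p.2.
Definition rslice (nu : H -> K) (t : tens2 H) : H := \sum_(p <- t) nu p.2 *: p.1.

Record hopf := Hopf {
  cop : H -> tens2 H;
  counit : dual H;
  antipode : {linear H -> H};
  cop_linear : forall (a : K) (x y : H),
      teq2 (cop (a *: x + y)) (tscale a (cop x) ++ cop y);
  cop_mul : forall x y, teq2 (cop (x * y)) (tmul (cop x) (cop y));
  cop_one : teq2 (cop 1) [:: (1, 1)];
  coassoc : forall x,
      teq3 (flatten [seq [seq (q.1, q.2, p.2) | q <- cop p.1] | p <- cop x])
           (flatten [seq [seq (p.1, q.1, q.2) | q <- cop p.2] | p <- cop x]);
  counit_mul : forall x y, counit (x * y) = counit x * counit y;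
  counit_one : counit 1 = 1;
  counitL : forall x, lslice counit (cop x) = x;
  counitR : forall x, rslice counit (cop x) = x;
  antipodeL : forall x,
      \sum_(p <- cop x) antipode p.1 * p.2 = counit x *: 1;
  antipodeR : forall x,
      \sum_(p <- cop x) p.1 * antipode p.2 = counit x *: 1;
  antipode_bij : bijective antipode
}.

Variable h : hopf.

(* V_Lambda = { (nu (x) id) Delta(Lambda) : nu in H' } *)
Definition V_ (L : H) (x : H) : Prop := exists nu : dual H, x = lslice nu (cop h L).
(* _Lambda V = { (id (x) nu) Delta(Lambda) : nu in H' } *)
Definition V'_ (L : H) (x : H) : Prop := exists nu : dual H, x = rslice nu (cop h L).

Definition integral_type (L : H) : Prop :=
  L != 0 /\ teq2 (tmul (cop h L) [:: (1, L)]) [:: (L, L)].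

Definition Lintegral_type (L Lt : H) : Prop :=
  Lt != 0 /\ teq2 (tmul (cop h Lt) [:: (1, Lt)]) [:: (L, Lt)].

(* pi_rel Lt a b  <->  a \in A_Lt and pi(a) = b, i.e.
   Delta(a)(1 (x) Lt) = b (x) Lt *)
Definition pi_rel (Lt a b : H) : Prop :=
  teq2 (tmul (cop h a) [:: (1, Lt)]) [:: (b, Lt)].

Definition ract (Lt x a y : H) : Prop :=
  exists2 b, pi_rel Lt a b & y = antipode h b * x.

Definition cyclic_module (Lt : H) : Prop :=
  exists2 m, V'_ Lt m &
    forall x, V'_ Lt x <-> exists2 a, V_ Lt a & ract Lt m a x.

Definition fin_dim (B : H -> Prop) : Prop :=
  exists s : seq H, (forall y, y \in s -> B y) /\
    forall x, B x -> exists c : nat -> K, x = \sum_(i < size s) c i *: s`_i.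

Definition frobenius (B : H -> Prop) : Prop :=
  fin_dim B /\
  exists sigma : H -> H -> K,
    [/\ forall (k : K) a a' b, B a -> B a' -> B b ->
          sigma (k *: a + a') b = k * sigma a b + sigma a' b,
        forall (k : K) a b b', B a -> B b -> B b' ->
          sigma a (k *: b + b') = k * sigma a b + sigma a b',
        forall a b c, B a -> B b -> B c ->
          sigma (a * b) c = sigma a (b * c),
        forall a, B a -> (forall b, B b -> sigma a b = 0) -> a = 0
      & forall b, B b -> (forall a, B a -> sigma a b = 0) -> b = 0].

End Hopf.

From HB Require Import structures.
From mathcomp Require Import all_boot all_order all_algebra.
From mathcomp Require Import boolp classical_sets.
From mathcomp Require Import ring.
Import GRing.Theory.
Local Open Scope classical_set_scope.
Local Open Scope ring_scope.

(* Let T = Delta(Lt), V = V_Lt = {(nu (x) id) T} and W = _Lt V = {(id (x) mu) T}.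
   Since mu ((nu (x) id) T) = nu ((id (x) mu) T), the map mu |-> (id (x) mu) T
   identifies W with the dual of the finite-dimensional space V.  Every a in V
   lies in A_Lt, and under this identification the action x . a = S(pi a) x
   becomes (mu . a)(v) = mu (a v).  Hence W is a cyclic V-module iff one
   functional phi "represents" the dual of V: every functional on V has the
   form phi (a _) with a in V (cyclic_moduleP).  For a finite-dimensional
   algebra B, Gram matrices show that a represented dual makes the form
   (a, b) |-> phi (a b) non-degenerate, so B is Frobenius with a right unit
   (represents_frobenius), and that a unital Frobenius algebra has a
   represented dual (frobenius_represents).  Finally, a right unit of V lying
   in V is 1, by the counit and antipode axioms (one_of_right_unit). *)

Section LinearFunctionals.
Context {K : fieldType} {V : lmodType K}.

Definition scalar_of {F : V -> K}
    (linF : forall (a : K) y z, F (a *: y + z) = a * F y + F z) : {scalar V} :=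
  HB.pack_for {scalar V} F (GRing.isLinear.Build K V K *%R F linF).

Lemma scalar_ofE F linF y : @scalar_of F linF y = F y.
Proof. by []. Qed.

Lemma scalar_linear (nu : {scalar V}) (a : K) y z :
  nu (a *: y + z) = a * nu y + nu z.
Proof. by rewrite linearD linearZ. Qed.

Lemma zero_linear (a : K) (y z : V) : 0 = a * 0 + 0 :> K.
Proof. by rewrite mulr0 addr0. Qed.

Definition zero_scalar : {scalar V} := @scalar_of (fun=> 0) zero_linear.

Lemma comb_scalar_linear (k : K) (n1 n2 : {scalar V}) (a : K) y z :
  k * n1 (a *: y + z) + n2 (a *: y + z)
  = a * (k * n1 y + n2 y) + (k * n1 z + n2 z).
Proof. by rewrite !scalar_linear; ring. Qed.

Definition comb_scalar (k : K) (n1 n2 : {scalar V}) : {scalar V} :=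
  scalar_of (comb_scalar_linear k n1 n2).

Definition subspace (X : set V) :=
  X 0 /\ forall (a : K) y z, X y -> X z -> X (a *: y + z).

Lemma subspaceZ X (a : K) y : subspace X -> X y -> X (a *: y).
Proof. by move=> [X0 XD] Xy; rewrite -[_ *: _]addr0; apply: XD. Qed.

Lemma subspaceN X y : subspace X -> X y -> X (- y).
Proof. by move=> sX Xy; rewrite -scaleN1r; apply: subspaceZ. Qed.

Lemma subspaceD X y z : subspace X -> X y -> X z -> X (y + z).
Proof. by move=> [X0 XD] Xy Xz; rewrite -[y]scale1r; apply: XD. Qed.

Lemma subspaceB X y z : subspace X -> X y -> X z -> X (y - z).
Proof. by move=> sX Xy Xz; apply: subspaceD => //; apply: subspaceN. Qed.

Lemma subspace_sum X n (c : 'I_n -> K) (u : 'I_n -> V) :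
  subspace X -> (forall i, X (u i)) -> X (\sum_i c i *: u i).
Proof.
move=> sX Xu; apply: (big_rec (fun y => X y)); first by case: sX.
by move=> i y _ Xy; case: sX => _; apply.
Qed.

(* Over an arbitrary (possibly
   infinite-dimensional) space this needs Zorn's lemma: a maximal subspace A
   containing W and avoiding x is a hyperplane complementary to the line
   through x, and the coordinate along x is the required functional. *)
Section Separation.
Variables (W : set V) (x : V).

Definition avoiding (X : set V) := [/\ subspace X, W `<=` X & ~ X x].

(* The empty set is admitted so that the union of the empty chain is harmless. *)
Lemma maximal_avoiding : subspace W -> ~ W x ->
  exists A, avoiding A /\ forall B, A `<` B -> ~ avoiding B.
Proof.
move=> sW nWx; pose P X := X = set0 \/ avoiding X.
have [|A [PA Amax]] := @Zorn_bigcup V P.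
  move=> F FP Ftot.
  have [[X0 FX0 /set0P [y0 X0y0]]|allE] := pselect (exists2 X, F X & X != set0);
    last first.
    left; apply/seteqP; split => // y [X FX Xy]; apply: allE; exists X => //.
    by apply/set0P; exists y.
  have avF X y : F X -> X y -> avoiding X.
    by move=> FX Xy; case: (FP X FX) => // XE; rewrite XE in Xy.
  right; split; [split|..].
  - by exists X0 => //; case: (avF X0 y0 FX0 X0y0) => -[].
  - move=> a u v [X1 FX1 X1u] [X2 FX2 X2v].
    case: (Ftot X1 X2 FX1 FX2) => S12.
      exists X2 => //; case: (avF X2 v FX2 X2v) => -[_ XD] _ _.
      by apply: XD => //; exact: S12.
    exists X1 => //; case: (avF X1 u FX1 X1u) => -[_ XD] _ _.
    by apply: XD => //; exact: S12.
  - by move=> w Ww; exists X0 => //; case: (avF X0 y0 FX0 X0y0) => _ + _; apply.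
  - by move=> [X FX Xx]; case: (avF X x FX Xx).
case: PA => [A0|avA].
  exfalso; apply: (Amax W); last by right; split.
  rewrite A0 /proper; split => // /(_ 0) W0; apply: W0; by case: sW.
by exists A; split => // B AB avB; apply: (Amax B AB); right.
Qed.

Lemma maximal_avoiding_coeff A : avoiding A ->
  (forall B, A `<` B -> ~ avoiding B) -> forall y, exists c : K, A (y - c *: x).
Proof.
move=> [sA WA nAx] Amax y.
have [Ay|nAy] := pselect (A y); first by exists 0; rewrite scale0r subr0.
pose B := [set z | exists a m, A m /\ z = m + a *: y].
have sB : subspace B.
  split; first by exists 0, 0; split; [case: sA|rewrite scale0r addr0].
  move=> a u v [a1 [m1 [Am1 ->]]] [a2 [m2 [Am2 ->]]].
  exists (a * a1 + a2), (a *: m1 + m2); split; first by case: sA => _; apply.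
  by rewrite scalerDr addrACA scalerA scalerDl.
have AB : A `<` B.
  rewrite /proper; split; first by move=> m Am; exists 0, m; rewrite scale0r addr0.
  move=> /(_ y) BA; apply: nAy; apply: BA.
  by exists 1, 0; rewrite add0r scale1r; split => //; case: sA.
have [a [m [Am xE]]] : B x.
  by apply: contrapT => nBx; apply: (Amax B AB); split => // w /WA /(proj1 AB).
have a0 : a != 0.
  by apply/negP => /eqP a0; apply: nAx; rewrite xE a0 scale0r addr0.
exists a^-1; rewrite xE scalerDr scalerA mulVf // scale1r opprD addrCA subrr.
by rewrite addr0; apply: subspaceN => //; apply: subspaceZ.
Qed.

Lemma avoiding_coeff_uniq A : subspace A -> ~ A x ->
  forall y c c', A (y - c *: x) -> A (y - c' *: x) -> c = c'.
Proof.
move=> sA nAx y c c' A1 A2; apply: contrapT => cc.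
have : A ((c' - c) *: x).
  have -> : (c' - c) *: x = (y - c *: x) - (y - c' *: x).
    by rewrite opprD opprK addrACA subrr add0r scalerBl addrC.
  exact: subspaceB.
move=> /(@subspaceZ A ((c' - c)^-1) _ sA); rewrite scalerA mulVf ?scale1r //.
by rewrite subr_eq0; apply/eqP => cE; apply: cc; rewrite cE.
Qed.

Lemma separating_functional : subspace W -> ~ W x ->
  exists g : {scalar V}, g x = 1 /\ forall y, W y -> g y = 0.
Proof.
move=> sW nWx; have [A [[sA WA nAx] Amax]] := maximal_avoiding sW nWx.
have coeff := @maximal_avoiding_coeff A (And3 sA WA nAx) Amax.
pose g y := projT1 (cid (coeff y)).
have gP y : A (y - g y *: x) := projT2 (cid (coeff y)).
have uniq := @avoiding_coeff_uniq A sA nAx.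
have glin (a : K) y z : g (a *: y + z) = a * g y + g z.
  apply: (uniq (a *: y + z)) => //.
  have -> : a *: y + z - (a * g y + g z) *: x
            = a *: (y - g y *: x) + (z - g z *: x).
    by rewrite scalerBr scalerA addrACA -opprD -scalerDl.
  by case: sA => _; apply.
exists (scalar_of glin); split.
  by apply: (uniq x) => //; rewrite scale1r subrr; case: sA.
by move=> w Ww; apply: (uniq w) => //; rewrite scale0r subr0; exact: WA.
Qed.

End Separation.

Lemma scalar_separates (y z : V) : (forall nu : {scalar V}, nu y = nu z) -> y = z.
Proof.
move=> nu_yz; apply/eqP; rewrite -subr_eq0; apply/negP => /negP nz.
have s0 : subspace [set 0] by split => // a u v -> ->; rewrite scaler0 addr0.
have nW : ~ [set 0] (y - z) by move=> /eqP; apply/negP.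
have [g [g1 _]] := @separating_functional [set 0] (y - z) s0 nW.
by move: g1; rewrite linearB /= nu_yz subrr => /eqP; rewrite eq_sym oner_eq0.
Qed.

Lemma nonzero_functional {y : V} : y != 0 -> exists nu : {scalar V}, nu y != 0.
Proof.
move=> y0; apply: contrapT => all0; move: y0; rewrite (@scalar_separates y 0) ?eqxx //.
move=> nu; rewrite linear0; apply: contrapT => nuy; apply: all0.
by exists nu; apply/eqP.
Qed.

Lemma linear_fun_sum {F : V -> K}
    (linF : forall (a : K) y z, F (a *: y + z) = a * F y + F z)
    n (c : 'I_n -> K) (u : 'I_n -> V) :
  F (\sum_i c i *: u i) = \sum_i c i * F (u i).
Proof.
transitivity (scalar_of linF (\sum_i c i *: u i)); first by [].
by rewrite linear_sum; apply: eq_bigr => i _; rewrite linearZ.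
Qed.

Definition span (s : seq V) (y : V) :=
  exists c : nat -> K, y = \sum_(i < size s) c i *: s`_i.

Lemma span_subspace s : subspace (span s).
Proof.
split; first by exists (fun=> 0); rewrite big1 // => i _; rewrite scale0r.
move=> a y z [c ->] [d ->]; exists (fun i => a * c i + d i).
rewrite scaler_sumr -big_split /=; apply: eq_bigr => i _.
by rewrite scalerA scalerDl.
Qed.

Lemma span_mem s y : y \in s -> span s y.
Proof.
move=> ys; exists (fun i => (i == index y s)%:R).
have yi : (index y s < size s)%N by rewrite index_mem.
rewrite (bigD1 (Ordinal yi)) //= eqxx scale1r nth_index // big1 ?addr0 //.
by move=> i ne; rewrite (_ : (i == index y s :> nat) = false) ?scale0r //; exact: negbTE.
Qed.

Lemma span_cons x s y : span (x :: s) y ->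
  exists a w, span s w /\ y = a *: x + w.
Proof.
move=> [c ->]; rewrite big_ord_recl /=.
exists (c 0%N), (\sum_(i < size s) c (bump 0 i) *: s`_i); split => //.
by exists (fun i => c i.+1).
Qed.

Definition dual_basis (B : set V) n (e : 'I_n -> V) (f : 'I_n -> {scalar V}) :=
  [/\ forall i, B (e i), forall i j, f i (e j) = (i == j)%:R
    & forall y, B y -> y = \sum_i f i y *: e i].

Lemma dual_basis_coord {B n e f} (c : 'I_n -> K) i : dual_basis B n e f ->
  f i (\sum_j c j *: e j) = c i.
Proof.
case=> _ fe _; rewrite linear_sum (bigD1 i) //= big1 ?addr0.
  by rewrite linearZ /= fe eqxx mulr1.
by move=> j /negbTE ji; rewrite linearZ /= fe eq_sym ji mulr0.
Qed.

Lemma dual_basis_expand {B n e f} {F : V -> K} : dual_basis B n e f ->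
  (forall (a : K) y z, F (a *: y + z) = a * F y + F z) ->
  forall y, B y -> F y = \sum_i f i y * F (e i).
Proof. by case=> _ _ exp linF y By; rewrite {1}(exp y By) (linear_fun_sum linF). Qed.

(* Adjoining to s a vector x outside its span: the separating functional g
   becomes the new coordinate, the old ones are corrected by a multiple of g. *)
Lemma dual_basis_cons {s x n e f} {g : {scalar V}} :
  (forall i, e i \in s) -> dual_basis (span s) n e f -> ~ span s x ->
  g x = 1 -> (forall y, span s y -> g y = 0) ->
  exists e' f', (forall i, e' i \in x :: s) /\ dual_basis (span (x :: s)) n.+1 e' f'.
Proof.
move=> es [_ fe sp] nsx gx gs.
have fl j (a : K) y z : (fun y => f j y - f j x * g y) (a *: y + z) =
    a * (f j y - f j x * g y) + (f j z - f j x * g z).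
  by rewrite /= !scalar_linear; ring.
pose e' (i : 'I_n.+1) := if unlift ord0 i is Some j then e j else x.
pose f' (i : 'I_n.+1) := if unlift ord0 i is Some j then scalar_of (fl j) else g.
have e'0 : e' ord0 = x by rewrite /e' unlift_none.
have e'S i : e' (lift ord0 i) = e i by rewrite /e' liftK.
have f'0 : f' ord0 = g by rewrite /f' unlift_none.
have f'S i y : f' (lift ord0 i) y = f i y - f i x * g y by rewrite /f' liftK.
have ge j : g (e j) = 0 by apply: gs; apply: span_mem.
have e'mem i : e' i \in x :: s.
  by case: (unliftP ord0 i) => [j ->|->]; rewrite ?e'S ?e'0 in_cons ?es ?orbT ?eqxx.
exists e', f'; split => //; split=> [i|i j|y].
- exact: span_mem.
- case: (unliftP ord0 i) => [i' ->|->]; case: (unliftP ord0 j) => [j' ->|->].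
  + by rewrite f'S e'S fe ge mulr0 subr0 (inj_eq (@lift_inj _ ord0)).
  + by rewrite f'S e'0 gx mulr1 subrr eq_sym (negbTE (neq_lift _ _)).
  + by rewrite f'0 e'S ge (negbTE (neq_lift _ _)).
  + by rewrite f'0 e'0 gx eqxx.
- move=> /span_cons [a [w [ws ->]]].
  have gy : g (a *: x + w) = a by rewrite scalar_linear gx (gs _ ws) mulr1 addr0.
  rewrite big_ord_recl f'0 e'0 gy; congr (_ + _); rewrite {1}(sp w ws).
  apply: eq_bigr => j _.
  by rewrite f'S e'S gy scalar_linear; congr (_ *: _); ring.
Qed.

Lemma span_dual_basis s : exists n e f,
  (forall i, e i \in s) /\ dual_basis (span s) n e f.
Proof.
elim: s => [|x s [n [e [f [es [eB fe sp]]]]]].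
  exists 0%N, (fun=> 0), (fun=> zero_scalar).
  by split; [case|split; [case|case|move=> y [c ->]; rewrite !big_ord0]].
have [xs|nxs] := pselect (span s x); last first.
  have [g [gx gs]] := @separating_functional (span s) x (span_subspace s) nxs.
  by exists n.+1; exact: (dual_basis_cons es (And3 eB fe sp) nxs gx gs).
have es' i : e i \in x :: s by rewrite in_cons es orbT.
exists n, e, f; split=> //; split=> // [i|y /span_cons [a [w [ws ->]]]].
  exact: span_mem.
by apply: sp; case: (span_subspace s) => _; apply.
Qed.

Lemma extend_functional {B n e f} {F : V -> K} :
  subspace B -> dual_basis B n e f ->
  (forall (a : K) y z, B y -> B z -> F (a *: y + z) = a * F y + F z) ->
  exists phi : {scalar V}, forall y, B y -> phi y = F y.
Proof.
move=> [B0 BD] [eB _ sp] linF.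
have F0 : F 0 = 0.
  have := linF 1 0 0 B0 B0; rewrite scale1r addr0 mul1r -{1}[F 0]addr0.
  by move/addrI/esym.
have lin (a : K) y z : (fun y => \sum_j f j y * F (e j)) (a *: y + z) =
    a * (\sum_j f j y * F (e j)) + \sum_j f j z * F (e j).
  rewrite mulr_sumr -big_split; apply: eq_bigr => j _ /=.
  by rewrite scalar_linear; ring.
exists (scalar_of lin) => y By; rewrite scalar_ofE [in RHS](sp y By).
suff [_ ->] : B (\sum_i f i y *: e i) /\
    F (\sum_i f i y *: e i) = \sum_i f i y * F (e i) by [].
apply: (big_rec2 (fun u r => B u /\ F u = r)) => [|i u r _ [Bu <-]].
  by split.
by split; [apply: BD | rewrite linF].
Qed.

Definition bilin (G : V -> V -> K) :=
  (forall (a : K) u u' v, G (a *: u + u') v = a * G u v + G u' v) /\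
  (forall (a : K) u v v', G u (a *: v + v') = a * G u v + G u v').

Lemma bilinZl (G : V -> V -> K) : bilin G ->
  forall (a : K) u v, G (a *: u) v = a * G u v.
Proof.
move=> bilG a u v.
transitivity (scalar_of (fun k u u' => bilG.1 k u u' v) (a *: u)) => //.
by rewrite linearZ.
Qed.

Definition gram (G : V -> V -> K) {n} (e : 'I_n -> V) : 'M[K]_n :=
  \matrix_(i, j) G (e i) (e j).

Section GramMatrix.
Context {B : set V} {G : V -> V -> K} {n : nat}.
Context {e : 'I_n -> V} {f : 'I_n -> {scalar V}}.
Hypotheses (sB : subspace B) (bilG : bilin G) (basis : dual_basis B n e f).
Local Notation gram := (gram G e).

Lemma gram_expandl w {a} : B a -> G a w = \sum_i f i a * G (e i) w.
Proof. exact: dual_basis_expand basis (fun k u u' => bilG.1 k u u' w) a. Qed.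

Lemma gram_expandr w {b} : B b -> G w b = \sum_j f j b * G w (e j).
Proof. exact: dual_basis_expand basis (fun k v v' => bilG.2 k w v v') b. Qed.

Lemma basis_comb_mem (c : 'I_n -> K) : B (\sum_i c i *: e i).
Proof. by apply: subspace_sum => // i; case: basis. Qed.

Lemma gram_unit_of_represent :
  (forall mu : {scalar V}, exists2 a, B a & forall v, B v -> G a v = mu v) ->
  gram \in unitmx.
Proof.
move=> rep; have /choice [a aP] :
    forall k, exists a, B a /\ forall v, B v -> G a v = f k v.
  by move=> k; have [a Ba aP] := rep (f k); exists a.
pose C : 'M[K]_n := \matrix_(k, i) f i (a k).
suff : C *m gram = 1%:M by case/mulmx1_unit.
case: basis => eB fe _; apply/matrixP => k j; rewrite !mxE.
have [Bak aPk] := aP k.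
rewrite -fe -(aPk _ (eB j)) (gram_expandl _ Bak).
by apply: eq_bigr => i _; rewrite !mxE.
Qed.

Lemma gram_unit_of_left_nondeg :
  (forall a, B a -> (forall b, B b -> G a b = 0) -> a = 0) -> gram \in unitmx.
Proof.
move=> nd; rewrite unitmxE unitfE; apply/negP => /det0P [v vn0 v0].
pose a := \sum_i v 0 i *: e i.
have a0 : a = 0.
  apply: nd => [|b Bb]; first exact: basis_comb_mem.
  rewrite (gram_expandr _ Bb) big1 // => j _.
  rewrite (linear_fun_sum (fun k u u' => bilG.1 k u u' (e j))).
  have := congr1 (fun m : 'M[K]_(1, n) => m 0 j) v0; rewrite !mxE => vj.
  suff -> : \sum_i v 0 i * G (e i) (e j) = 0 by rewrite mulr0.
  by rewrite -[RHS]vj; apply: eq_bigr => i _; rewrite mxE.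
move: vn0; rewrite (_ : v = 0) ?eqxx //; apply/rowP => i.
by rewrite -(dual_basis_coord (fun i => v 0 i) i basis) -/a a0 linear0 mxE.
Qed.

Lemma gram_represent : gram \in unitmx ->
  forall mu : {scalar V}, exists2 a, B a & forall v, B v -> G a v = mu v.
Proof.
move=> uM mu; pose c := (\row_j mu (e j)) *m invmx gram.
exists (\sum_i c 0 i *: e i); first exact: basis_comb_mem.
have Ge j : G (\sum_i c 0 i *: e i) (e j) = mu (e j).
  rewrite (linear_fun_sum (fun k u u' => bilG.1 k u u' (e j))).
  have : (c *m gram) 0 j = mu (e j) by rewrite mulmxKV // mxE.
  by move=> <-; rewrite mxE; apply: eq_bigr => i _; rewrite [gram _ _]mxE.
move=> v Bv; rewrite (gram_expandr _ Bv).
rewrite (dual_basis_expand basis (scalar_linear mu) _ Bv).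
by apply: eq_bigr => j _; rewrite Ge.
Qed.

Lemma gram_left_nondeg : gram \in unitmx ->
  forall a, B a -> (forall b, B b -> G a b = 0) -> a = 0.
Proof.
move=> uM a Ba aG; pose r := \row_i f i a.
have r0 : r *m gram = 0.
  apply/rowP => j; rewrite !mxE -[RHS](aG (e j)); last by case: basis.
  by rewrite (gram_expandl _ Ba); apply: eq_bigr => i _; rewrite !mxE.
have /rowP rE : r = 0 by rewrite -(mulmxK uM r) r0 mul0mx.
case: basis => _ _ exp; rewrite (exp a Ba) big1 // => i _.
by have := rE i; rewrite !mxE => ->; rewrite scale0r.
Qed.

Lemma gram_right_nondeg : gram \in unitmx ->
  forall b, B b -> (forall a, B a -> G a b = 0) -> b = 0.
Proof.
move=> uM b Bb Gb; pose w := \col_j f j b.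
have w0 : gram *m w = 0.
  apply/colP => i; rewrite !mxE -[RHS](Gb (e i)); last by case: basis.
  by rewrite (gram_expandr _ Bb); apply: eq_bigr => j _; rewrite !mxE mulrC.
have /colP wE : w = 0 by rewrite -(mulKmx uM w) w0 mulmx0.
case: basis => _ _ exp; rewrite (exp b Bb) big1 // => j _.
by have := wE j; rewrite !mxE => ->; rewrite scale0r.
Qed.

End GramMatrix.
End LinearFunctionals.

Section FiniteDimAlgebra.
Context {K : fieldType} {H : algType K}.

Lemma bilin_mul (phi : {scalar H}) : bilin (fun a b => phi (a * b)).
Proof.
by split=> k u u' v; rewrite ?mulrDl ?mulrDr -?scalerAl -?scalerAr scalar_linear.
Qed.

Definition represents (B : set H) (phi : {scalar H}) :=
  forall mu : {scalar H}, exists2 a, B a & forall v, B v -> mu v = phi (a * v).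

Context {B : set H}.

Hypotheses (sB : subspace B) (mulB : forall a b, B a -> B b -> B (a * b)).
Hypothesis finB : fin_dim B.

Lemma fin_dim_dual_basis : exists n e f, dual_basis B n e f.
Proof.
have [s [sB' spB]] := finB; have [n [e [f [es [_ fe sp]]]]] := span_dual_basis s.
by exists n, e, f; split=> [i|//|v /spB /sp //]; apply: sB'.
Qed.

(* If phi represents the dual of B, then (a, b) |-> phi (a b) is a
   non-degenerate associative form on B, so B is Frobenius; the element e0
   representing phi itself is then a unit of B (we record that it is a right
   unit). *)
Lemma represents_frobenius {phi} : represents B phi ->
  (exists2 e0, B e0 & forall a, B a -> a * e0 = a) /\ frobenius B.
Proof.
move=> rep; have [n [e [f basis]]] := fin_dim_dual_basis.
pose G a b := phi (a * b); have bilG : bilin G := bilin_mul phi.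
have uM : gram G e \in unitmx.
  apply: (gram_unit_of_represent bilG basis) => mu.
  by have [a Ba aP] := rep mu; exists a => // v Bv; rewrite aP.
have ndL := gram_left_nondeg bilG basis uM.
have [e0 Be0 e0P] := rep phi.
have e0L a : B a -> e0 * a = a.
  move=> Ba; apply/eqP; rewrite -subr_eq0; apply/eqP; apply: ndL => [|b Bb].
    by apply: subspaceB => //; apply: mulB.
  by rewrite /G mulrBl linearB /= -mulrA -e0P ?subrr //; apply: mulB.
have e0R a : B a -> a * e0 = a.
  move=> Ba; apply/eqP; rewrite -subr_eq0; apply/eqP; apply: ndL => [|b Bb].
    by apply: subspaceB => //; apply: mulB.
  by rewrite /G mulrBl linearB /= -mulrA e0L ?subrr.
split; first by exists e0.
split=> //; exists G; split=> // [k a a' b _ _ _|k a b b' _ _ _|a b c _ _ _|].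
- exact: bilG.1.
- exact: bilG.2.
- by rewrite /G mulrA.
- exact: gram_right_nondeg bilG basis uM.
Qed.

(* Conversely, the form of a unital Frobenius algebra B is phi (a b) for a
   functional phi extending b |-> sigma 1 b, and phi represents the dual. *)
Lemma frobenius_represents : B 1 -> frobenius B -> exists phi, represents B phi.
Proof.
move=> B1 [_ [sigma [linL linR assoc ndL _]]].
have [n [e [f basis]]] := fin_dim_dual_basis.
have [phi phiP] := extend_functional sB basis (fun k b b' => linR k 1 b b' B1).
have sigmaE a b : B a -> B b -> sigma a b = phi (a * b).
  move=> Ba Bb; rewrite phiP; last exact: mulB.
  by rewrite -(assoc 1 a b) ?mul1r.
have bilG := bilin_mul phi.
have uM : gram (fun a b => phi (a * b)) e \in unitmx.
  apply: (gram_unit_of_left_nondeg sB bilG basis) => a Ba aG.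
  by apply: ndL => // b Bb; rewrite sigmaE // aG.
exists phi => mu; have [a Ba aP] := gram_represent sB bilG basis uM mu.
by exists a => // v Bv; rewrite aP.
Qed.

End FiniteDimAlgebra.

Section Tensors.
Context {K : fieldType} {H : algType K}.

Lemma lmul_linear (c : H) (nu : {scalar H}) (a : K) y z :
  nu (c * (a *: y + z)) = a * nu (c * y) + nu (c * z).
Proof. by rewrite mulrDr -scalerAr scalar_linear. Qed.

Lemma rmul_linear (c : H) (nu : {scalar H}) (a : K) y z :
  nu ((a *: y + z) * c) = a * nu (y * c) + nu (z * c).
Proof. by rewrite mulrDl -scalerAl scalar_linear. Qed.

Definition lmul_scalar (c : H) (nu : {scalar H}) : {scalar H} :=
  scalar_of (lmul_linear c nu).
Definition rmul_scalar (c : H) (nu : {scalar H}) : {scalar H} :=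
  scalar_of (rmul_linear c nu).


Lemma sum_tmul (t s : tens2 H) (F : H * H -> K) :
  \sum_(p <- tmul t s) F p
  = \sum_(p <- t) \sum_(q <- s) F (p.1 * q.1, p.2 * q.2).
Proof. by rewrite big_flatten /= big_map; apply: eq_bigr => p _; rewrite big_map. Qed.

Lemma sum_tmul1 (t : tens2 H) a b (F : H * H -> K) :
  \sum_(p <- tmul t [:: (a, b)]) F p = \sum_(p <- t) F (p.1 * a, p.2 * b).
Proof. by rewrite sum_tmul; apply: eq_bigr => p _; rewrite big_seq1. Qed.

Lemma lslice_pairing (nu mu : {scalar H}) (t : tens2 H) :
  mu (lslice nu t) = \sum_(p <- t) nu p.1 * mu p.2.
Proof. by rewrite linear_sum; apply: eq_bigr => p _; rewrite linearZ. Qed.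

Lemma rslice_pairing (nu mu : {scalar H}) (t : tens2 H) :
  nu (rslice mu t) = \sum_(p <- t) nu p.1 * mu p.2.
Proof. by rewrite linear_sum; apply: eq_bigr => p _; rewrite linearZ /= mulrC. Qed.

Lemma slice_pairing (nu mu : {scalar H}) (t : tens2 H) :
  mu (lslice nu t) = nu (rslice mu t).
Proof. by rewrite lslice_pairing rslice_pairing. Qed.

Lemma bilin_prod (nu mu : {scalar H}) : bilin (fun u v => nu u * mu v).
Proof. by split=> a u u' v /=; rewrite !scalar_linear; ring. Qed.

(* teq2 only tests products of functionals, but over a field it already
   forces equality under every bilinear form: expand the first legs along a
   dual basis, so that each term becomes a product of functionals. *)
Lemma teq2_bilin {t s : tens2 H} {G : H -> H -> K} : bilin G -> teq2 t s ->
  \sum_(p <- t) G p.1 p.2 = \sum_(p <- s) G p.1 p.2.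
Proof.
move=> [GL GR] ts; pose legs := [seq p.1 | p <- t] ++ [seq p.1 | p <- s].
have [n [e [f [_ basis]]]] := span_dual_basis legs.
have expand (r : tens2 H) : {subset [seq p.1 | p <- r] <= legs} ->
    \sum_(p <- r) G p.1 p.2
    = \sum_i \sum_(p <- r) f i p.1 * scalar_of (GR^~ (e i)) p.2.
  move=> sub; rewrite exchange_big /=; apply: eq_big_seq => p pr.
  apply: (dual_basis_expand basis (fun a u u' => GL a u u' p.2)).
  by apply: span_mem; apply: sub; apply: map_f.
rewrite !expand; first by apply: eq_bigr => i _; apply: ts.
all: by move=> y; rewrite mem_cat => ->; rewrite ?orbT.
Qed.

Definition trilin (G : H -> H -> H -> K) :=
  [/\ forall (a : K) u u' v w, G (a *: u + u') v w = a * G u v w + G u' v w,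
      forall (a : K) u v v' w, G u (a *: v + v') w = a * G u v w + G u v' w &
      forall (a : K) u v w w', G u v (a *: w + w') = a * G u v w + G u v w'].

Lemma teq3_trilin {t s : tens3 H} {G : H -> H -> H -> K} : trilin G -> teq3 t s ->
  \sum_(p <- t) G p.1.1 p.1.2 p.2 = \sum_(p <- s) G p.1.1 p.1.2 p.2.
Proof.
move=> [G1 G2 G3] ts.
pose legs1 := [seq p.1.1 | p <- t] ++ [seq p.1.1 | p <- s].
pose legs2 := [seq p.1.2 | p <- t] ++ [seq p.1.2 | p <- s].
have [n [e [f [_ basis]]]] := span_dual_basis legs1.
have [m [e' [f' [_ basis']]]] := span_dual_basis legs2.
have expand (r : tens3 H) : {subset [seq p.1.1 | p <- r] <= legs1} ->
    {subset [seq p.1.2 | p <- r] <= legs2} ->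
    \sum_(p <- r) G p.1.1 p.1.2 p.2 = \sum_i \sum_j \sum_(p <- r)
      f i p.1.1 * f' j p.1.2 * scalar_of (fun a w w' => G3 a (e i) (e' j) w w') p.2.
  move=> sub1 sub2; under [RHS]eq_bigr do rewrite exchange_big.
  rewrite exchange_big /=; apply: eq_big_seq => p pr.
  rewrite (dual_basis_expand basis (fun a u u' => G1 a u u' p.1.2 p.2)); last first.
    by apply: span_mem; apply: sub1; apply: map_f.
  apply: eq_bigr => i _.
  rewrite (dual_basis_expand basis' (fun a v v' => G2 a (e i) v v' p.2)); last first.
    by apply: span_mem; apply: sub2; apply: map_f.
  by rewrite mulr_sumr; apply: eq_bigr => j _; rewrite mulrA.
rewrite !expand; first by apply: eq_bigr => i _; apply: eq_bigr => j _; apply: ts.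
all: by move=> y; rewrite mem_cat => ->; rewrite ?orbT.
Qed.

End Tensors.

Section HopfAlgebra.
Context {K : fieldType} {H : algType K}.
Context {h : hopf H}.
Local Notation cop := (cop h).
Local Notation eps := (counit h).
Local Notation S := (antipode h).

Definition cop_form (G : H -> H -> K) (y : H) := \sum_(q <- cop y) G q.1 q.2.

Lemma cop_form_linear {G : H -> H -> K} : bilin G ->
  forall (a : K) y z, cop_form G (a *: y + z) = a * cop_form G y + cop_form G z.
Proof.
move=> bilG a y z; rewrite /cop_form (teq2_bilin bilG (cop_linear h a y z)).
rewrite big_cat /= big_map mulr_sumr; congr (_ + _).
by apply: eq_bigr => q _; rewrite bilinZl.
Qed.

Definition cop_scalar {G : H -> H -> K} (bilG : bilin G) : {scalar H} :=
  scalar_of (cop_form_linear bilG).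

Lemma cop_form_lslice {G : H -> H -> K} (bilG : bilin G) (nu : {scalar H}) (t : tens2 H) :
  cop_form G (lslice nu t) = \sum_(p <- t) nu p.1 * cop_form G p.2.
Proof.
transitivity (cop_scalar bilG (lslice nu t)) => //.
by rewrite linear_sum; apply: eq_bigr => p _; rewrite linearZ.
Qed.

Lemma coassoc_scalar x (n1 n2 n3 : {scalar H}) :
  \sum_(p <- cop x) \sum_(q <- cop p.1) n1 q.1 * n2 q.2 * n3 p.2 =
  \sum_(p <- cop x) \sum_(q <- cop p.2) n1 p.1 * n2 q.1 * n3 q.2.
Proof.
have := coassoc h x n1 n2 n3; rewrite !big_flatten /= !big_map.
by under eq_bigr do rewrite big_map; under [RHS]eq_bigr do rewrite big_map.
Qed.

Lemma coassoc_trilin x {G : H -> H -> H -> K} : trilin G ->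
  \sum_(p <- cop x) \sum_(q <- cop p.1) G q.1 q.2 p.2 =
  \sum_(p <- cop x) \sum_(q <- cop p.2) G p.1 q.1 q.2.
Proof.
move=> triG; have := teq3_trilin triG (coassoc h x); rewrite !big_flatten /= !big_map.
by under eq_bigr do rewrite big_map; under [RHS]eq_bigr do rewrite big_map.
Qed.

Section Slices.
Context {L Lt : H}.
Local Notation T := (cop Lt).
Local Notation V := (V_ h Lt).

Lemma pi_lslice : Lintegral_type h L Lt ->
  forall nu : {scalar H}, pi_rel h Lt (lslice nu T) (lslice nu (cop L)).
Proof.
move=> [_ LtI] nu n1 n2; rewrite sum_tmul1 big_seq1 /=.
under eq_bigr do rewrite mulr1.
pose rho := rmul_scalar Lt n2; pose Psi := cop_scalar (bilin_prod nu n1).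
transitivity (cop_form (fun u v => n1 u * rho v) (lslice nu T)) => //.
rewrite (cop_form_lslice (bilin_prod n1 rho)).
transitivity (\sum_(p <- T) Psi p.1 * n2 (p.2 * Lt)).
  under eq_bigr do rewrite /cop_form mulr_sumr.
  under eq_bigr do under eq_bigr do rewrite mulrA.
  rewrite -coassoc_scalar; apply: eq_bigr => p _.
  by rewrite scalar_ofE /cop_form mulr_suml.
have := LtI Psi n2; rewrite sum_tmul1 big_seq1 /=.
under eq_bigr do rewrite mulr1; move=> ->.
by rewrite /cop_form lslice_pairing.
Qed.

Lemma act_pairing {a b} : pi_rel h Lt a b -> forall nu mu : {scalar H},
  \sum_(p <- T) nu (S b * p.1) * mu p.2 = \sum_(p <- T) nu p.1 * mu (a * p.2).
Proof.
move=> pab nu mu.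
pose F x y z := \sum_(p <- T) nu (S x * (y * p.1)) * mu (z * p.2).
have triF : trilin F.
  split=> k u u' v w; rewrite mulr_sumr -big_split; apply: eq_bigr => p _ /=.
  - by rewrite linearD linearZ /= mulrDl -scalerAl scalar_linear; ring.
  - by rewrite mulrDl mulrDr -scalerAl -scalerAr scalar_linear; ring.
  - by rewrite mulrDl -scalerAl scalar_linear; ring.
pose SG u v := cop_form (fun x y => nu (S u * x) * mu y) v.
have bilSG : bilin SG.
  split=> k u u' v; last first.
    by apply: cop_form_linear; apply: (bilin_prod (lmul_scalar (S u) nu) mu).
  rewrite /SG /cop_form mulr_sumr -big_split; apply: eq_bigr => q _ /=.
  by rewrite linearD linearZ /= mulrDl -scalerAl scalar_linear; ring.
(* Apply the defining identity of pi to SG, then expand Delta(a_(2) Lt). *)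
have := teq2_bilin bilSG pab; rewrite sum_tmul1 big_seq1 /=.
under eq_bigr do rewrite mulr1; rewrite /SG /cop_form => <-.
transitivity (\sum_(q <- cop a) \sum_(s <- cop q.2) F q.1 s.1 s.2).
  apply: eq_bigr => q _.
  by have := cop_mul h q.2 Lt (lmul_scalar (S q.1) nu) mu; rewrite sum_tmul => ->.
(* Reassociate, so that S(a_(1)) a_(2) = eps(a_(1)) 1 appears ... *)
rewrite -(coassoc_trilin a triF).
transitivity (\sum_(q <- cop a) \sum_(p <- T) eps q.1 * nu p.1 * mu (q.2 * p.2)).
  apply: eq_bigr => q _; rewrite exchange_big /=; apply: eq_bigr => p _.
  rewrite -mulr_suml; congr (_ * _).
  have := antipodeL h q.1 => /(congr1 (fun z => nu (z * p.1))).
  rewrite mulr_suml linear_sum -scalerAl mul1r linearZ /= => <-.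
  by apply: eq_bigr => s _; rewrite mulrA.
(* ... and eps(a_(1)) a_(2) = a. *)
rewrite exchange_big /=; apply: eq_bigr => p _.
rewrite -{2}(counitL h a) /lslice mulr_suml linear_sum mulr_sumr.
by apply: eq_bigr => q _; rewrite -scalerAl linearZ /=; ring.
Qed.

Lemma act_rslice {a b} (mu : {scalar H}) : pi_rel h Lt a b ->
  S b * rslice mu T = rslice (lmul_scalar a mu) T.
Proof.
move=> pab; apply: scalar_separates => nu.
rewrite rslice_pairing -(act_pairing pab) /rslice mulr_sumr linear_sum.
by apply: eq_bigr => p _; rewrite -scalerAr linearZ /= mulrC.
Qed.

Lemma act_lslice {a b} (nu : {scalar H}) : pi_rel h Lt a b ->
  a * lslice nu T = lslice (lmul_scalar (S b) nu) T.
Proof.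
move=> pab; apply: scalar_separates => mu.
rewrite lslice_pairing (act_pairing pab) /lslice mulr_sumr linear_sum.
by apply: eq_bigr => p _; rewrite -scalerAr linearZ.
Qed.

Lemma V_subspace : subspace V.
Proof.
split; first by exists zero_scalar; rewrite /lslice big1 // => p _; rewrite scale0r.
move=> k y z [n1 ->] [n2 ->]; exists (comb_scalar k n1 n2).
rewrite /lslice scaler_sumr -big_split; apply: eq_bigr => p _ /=.
by rewrite scalerA scalerDl.
Qed.

Lemma V_mul : Lintegral_type h L Lt -> forall x y, V x -> V y -> V (x * y).
Proof.
move=> LtI x y [n0 ->] [n1 ->].
by rewrite (act_lslice _ (pi_lslice LtI n0)); eexists.
Qed.

(* V_Lt is finite dimensional: expand the first legs of Delta(Lt). *)
Lemma V_fin_dim : fin_dim V.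
Proof.
have [n [e [f [_ basis]]]] := span_dual_basis [seq p.1 | p <- T].
exists [seq lslice (f i) T | i <- enum 'I_n]; split.
  by move=> y /mapP [i _ ->]; exists (f i).
move=> x [nu ->].
have -> : lslice nu T = \sum_i nu (e i) *: lslice (f i) T.
  rewrite /lslice; under [RHS]eq_bigr do rewrite scaler_sumr.
  rewrite exchange_big /=; apply: eq_big_seq => p pT.
  rewrite (dual_basis_expand basis (scalar_linear nu)); last first.
    by apply: span_mem; apply: map_f.
  by rewrite scaler_suml; apply: eq_bigr => i _; rewrite scalerA mulrC.
exists (fun k => if insub k is Some i then nu (e (i : 'I_n)) else 0).
rewrite size_map size_enum_ord; apply: eq_bigr => i _.
by rewrite (nth_map i) ?size_enum_ord // nth_ord_enum valK.
Qed.

Lemma V_left_coideal (nu : {scalar H}) v : V v -> V (lslice nu (cop v)).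
Proof.
move=> [n0 ->]; exists (cop_scalar (bilin_prod n0 nu)); apply: scalar_separates => mu.
rewrite !lslice_pairing.
transitivity (cop_form (fun u v => nu u * mu v) (lslice n0 T)) => //.
rewrite (cop_form_lslice (bilin_prod nu mu)).
under eq_bigr do rewrite /cop_form mulr_sumr.
under eq_bigr do under eq_bigr do rewrite mulrA.
rewrite -coassoc_scalar; apply: eq_bigr => p _.
by rewrite scalar_ofE /cop_form mulr_suml.
Qed.

Lemma rslice_eqP (mu mu' : {scalar H}) :
  rslice mu T = rslice mu' T <-> forall v, V v -> mu v = mu' v.
Proof.
split=> [E v [nu ->]|E]; first by rewrite !slice_pairing E.
apply: scalar_separates => nu; rewrite -!slice_pairing; apply: E.
by exists nu.
Qed.

Lemma cyclic_moduleP : Lintegral_type h L Lt ->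
  cyclic_module h Lt <-> exists phi : {scalar H}, represents V phi.
Proof.
move=> LtI; split=> [[m [phi ->] cyc]|[phi rep]].
  exists phi => mu; have [|a Va [b pab mE]] := (cyc (rslice mu T)).1.
    by exists mu.
  exists a => //; apply/(rslice_eqP mu (lmul_scalar a phi)).
  by rewrite mE (act_rslice _ pab).
exists (rslice phi T); first by exists phi.
move=> x; split=> [[mu ->]|[a Va [b pab ->]]]; last first.
  by rewrite (act_rslice _ pab); eexists.
have [a Va aP] := rep mu; exists a => //.
have [nu0 aE] := Va; exists (lslice nu0 (cop L)); first by rewrite aE; exact: pi_lslice.
rewrite (act_rslice _ (_ : pi_rel h Lt a _)); last by rewrite aE; exact: pi_lslice.
by apply/(rslice_eqP mu (lmul_scalar a phi)).
Qed.

(* A right unit e0 of V_Lt lying in V_Lt is the unit of H: eps(e0) = 1, and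
   since V_Lt is a left coideal, Delta(e0)(1 (x) e0) = Delta(e0); applying
   m (S (x) id) gives eps(e0) e0 = eps(e0) 1. *)
Lemma one_of_right_unit {e0} : Lintegral_type h L Lt -> V e0 ->
  (forall a, V a -> a * e0 = a) -> e0 = 1.
Proof.
move=> [Lt0 _] Ve0 e0R.
have [nu nuLt] := nonzero_functional Lt0.
have eps1 : eps e0 = 1.
  have epsv : eps (lslice nu T) = nu Lt by rewrite slice_pairing counitR.
  have := congr1 eps (e0R _ (ex_intro _ nu erefl)).
  rewrite counit_mul epsv -{2}[nu Lt]mul1r mulrC; exact: mulIf.
have cop_e0 : teq2 (tmul (cop e0) [:: (1, e0)]) (cop e0).
  move=> n1 n2; rewrite sum_tmul1.
  under eq_bigr do rewrite mulr1.
  rewrite -lslice_pairing -[in RHS](e0R (lslice n1 (cop e0))); last exact: V_left_coideal.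
  rewrite /lslice mulr_suml linear_sum; apply: eq_bigr => q _.
  by rewrite -scalerAl linearZ.
apply: scalar_separates => lam.
have bilS : bilin (fun u v => lam (S u * v)).
  split=> a u u' v; first by rewrite linearD linearZ mulrDl -scalerAl scalar_linear.
  by rewrite mulrDr -scalerAr scalar_linear.
have := teq2_bilin bilS cop_e0; rewrite sum_tmul1 /=.
under eq_bigr do rewrite mulr1 mulrA.
rewrite -linear_sum -mulr_suml -linear_sum antipodeL eps1 scale1r mul1r.
by move=> ->.
Qed.

End Slices.
End HopfAlgebra.

Theorem mainTheorem5 (K : fieldType) (H : algType K) (h : hopf H) (L Lt : H) :
  integral_type h L -> Lintegral_type h L Lt ->
  (cyclic_module h Lt <-> (V_ h Lt 1 /\ frobenius (V_ h Lt))).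
Proof.
move=> _ LtI.
have sV : subspace (V_ h Lt) := V_subspace.
have finV : fin_dim (V_ h Lt) := V_fin_dim.
have mulV := V_mul LtI.
rewrite (cyclic_moduleP LtI); split=> [[phi rep]|[V1 frobV]].
  have [[e0 Ve0 e0R] frobV] := represents_frobenius sV mulV finV rep.
  by rewrite -(one_of_right_unit LtI Ve0 e0R).
exact: frobenius_represents sV mulV finV V1 frobV.
Qed.
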